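(* Let $A\in\mathbb R^{m\times N}$, let $\mathcal B=(\mathcal B_1,\dots,\mathcal B_B)$ be a block structure with weights $\omega=(\omega_1,\dots,\omega_B)$, $\omega_i\ge1$. Let $s\ge2\|\omega\|_\infty^2$ and suppose $A$ satisfies the WBRIP of order $2s$ with constant $\delta_{2s}<\frac{1}{2\sqrt2+1}$. Then $A$ satisfies the $\ell^2_\omega$-BRNSP of order $s$ with constants $\rho=\frac{2\sqrt2\,\delta_{2s}}{1-\delta_{2s}}$ and $\tau=\frac{\sqrt{1+\delta_{2s}}}{1-\delta_{2s}}$.
   Context: Block structure: $\mathcal B=(\mathcal B_1,\dots,\mathcal B_B)$ partition of $\{1,\dots,N\}$; $x[b]=x[\mathcal B_b]$; for $S\subseteq\{1,\dots,B\}$, $x[S]$ equals $x$ on blocks in $S$ and $0$ elsewhere, $S^c$ its complement. Weights $\omega_b\ge1$, $\|\omega\|_\infty=\max_b\omega_b$, $\omega(S)=\sum_{b\in S}\omega_b^2$. $\|x\|_{2,p}^{(\omega)}=\big(\sum_b\omega_b^{2-p}\|x[b]\|_2^p\big)^{1/p}$. $\|x\|_0^{(\omega)}=\omega(\{b:x[b]\ne0\})$. Definition ($\ell^p_\omega$-BRNSP): $A$ satisfies the weighted block $\ell^p$ robust null space property of order $s$ with constants $\rho\in(0,1)$, $\tau>0$ if $\|x[S]\|_{2,p}^{(\omega)}\le\frac{\rho}{s^{1-1/p}}\|x[S^c]\|_{2,1}^{(\omega)}+\tau\|Ax\|_2$ for all $x\in\mathbb R^N$ and all $S$ with $\omega(S)\le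 s$. Definition (WBRIP): $A$ satisfies the weighted block restricted isometry property of order $t\ge\|\omega\|_\infty$ with constant $\delta\in(0,1)$ if $(1-\delta)\|x\|_2^2\le\|Ax\|_2^2\le(1+\delta)\|x\|_2^2$ for all $x$ with $\|x\|_0^{(\omega)}\le t$; the smallest such $\delta$ is denoted $\delta_t$. *)

(* the statement is purely algebraic/order-theoretic over the
   reals (sums, products, square roots), so we state it for an arbitrary
   real closed field R (which includes the reals). *)
From HB Require Import structures.
From mathcomp Require Import all_boot all_order all_algebra.
Set Implicit Arguments. Unset Strict Implicit. Unset Printing Implicit Defensive.
Import Order.TTheory GRing.Theory Num.Theory.
Local Open Scope ring_scope.

Section BlockDefs.
Variables (R : rcfType) (N B : nat).
(* Block structure: blk i = index of the block containing coordinate i. *)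
Variable blk : 'I_N -> 'I_B.
Variable w : 'I_B -> R.

Definition l2norm (n : nat) (x : 'cV[R]_n) : R := Num.sqrt (\sum_i x i 0 ^+ 2).

Definition bnorm (x : 'cV[R]_N) (b : 'I_B) : R :=
  Num.sqrt (\sum_(i | blk i == b) x i 0 ^+ 2).

Definition restrict (S : {set 'I_B}) (x : 'cV[R]_N) : 'cV[R]_N :=
  \col_i (if blk i \in S then x i 0 else 0).

Definition block_nz (x : 'cV[R]_N) (b : 'I_B) : bool :=
  [exists i, (blk i == b) && (x i 0 != 0)].

Definition womega (S : {set 'I_B}) : R := \sum_(b in S) w b ^+ 2.

Definition wnorm0 (x : 'cV[R]_N) : R := womega [set b | block_nz x b].

Definition winf : R := \big[Num.max/0]_b w b.

Definition wnorm21 (x : 'cV[R]_N) : R := \sum_b w b * bnorm x b.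

(* ||x||_{2,2}^(omega) = (sum_b omega_b^{2-2} ||x[b]||_2^2)^{1/2} *)
Definition wnorm22 (x : 'cV[R]_N) : R :=
  Num.sqrt (\sum_b w b ^+ 0 * bnorm x b ^+ 2).

Definition WBRIP (m : nat) (A : 'M[R]_(m, N)) (t delta : R) : Prop :=
  [/\ 0 < delta < 1, winf <= t &
   forall x : 'cV[R]_N, wnorm0 x <= t ->
     (1 - delta) * l2norm x ^+ 2 <= l2norm (A *m x) ^+ 2
     /\ l2norm (A *m x) ^+ 2 <= (1 + delta) * l2norm x ^+ 2].

(* Weighted block l^2 robust null space property of order s with constants
   rho, tau; note s^{1-1/2} = sqrt s. *)
Definition BRNSP2 (m : nat) (A : 'M[R]_(m, N)) (s rho tau : R) : Prop :=
  [/\ 0 < rho < 1, 0 < tau &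
   forall (x : 'cV[R]_N) (S : {set 'I_B}), womega S <= s ->
     wnorm22 (restrict S x)
       <= rho / Num.sqrt s * wnorm21 (restrict (~: S) x) + tau * l2norm (A *m x)].
End BlockDefs.

From Pilot Require Import Defs.
From HB Require Import structures.
From mathcomp Require Import all_boot all_order all_algebra.
From mathcomp Require Import ring lra zify.
Import Order.TTheory GRing.Theory Num.Theory.
Set Implicit Arguments. Unset Strict Implicit. Unset Printing Implicit Defensive.
Local Open Scope ring_scope.

(* Rank the blocks outside S by the ratio
   ||x[b]||_2 / omega_b and cut the complement of S greedily into groups
   T1, T2, ... of weight <= s, each (but the last) of weight >= s/2; this is
   possible because every block weighs at most s/2.  A group is then bounded
   by the weighted l^{2,1} mass of the group before it:
   ||x[T_{j+1}]||_2 <= 2/sqrt s * wmass(T_j).  With the head z = x[S] + x[T1]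
   (weight <= 2s), the RIP and its polarized form give
     (1 - delta) ||z||^2 <= <Az, Ax> - sum_{j>=2} <Az, A x[T_j]>
                          <= sqrt(1+delta) ||z|| ||Ax||
                             + sqrt 2 delta ||z|| * 2/sqrt s * wmass(S^c),
   and dividing by ||z|| >= ||x[S]|| yields the claim. *)

Section Euclid.
Context {R : rcfType}.

Definition dot {n} (u v : 'cV[R]_n) : R := \sum_i u i 0 * v i 0.

Lemma dot_ge0 {n} (u : 'cV[R]_n) : 0 <= dot u u.
Proof. by apply: sumr_ge0 => i _; rewrite -expr2 sqr_ge0. Qed.

Lemma sqr_l2norm {n} (u : 'cV[R]_n) : l2norm u ^+ 2 = dot u u.
Proof.
rewrite /l2norm sqr_sqrtr; last by apply: sumr_ge0 => i _; rewrite sqr_ge0.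
by apply: eq_bigr => i _; rewrite expr2.
Qed.

Lemma l2norm_ge0 {n} (u : 'cV[R]_n) : 0 <= l2norm u.
Proof. exact: sqrtr_ge0. Qed.

Lemma dotC {n} (u v : 'cV[R]_n) : dot u v = dot v u.
Proof. by apply: eq_bigr => i _; rewrite mulrC. Qed.

Lemma dotDr {n} (u v v' : 'cV[R]_n) : dot u (v + v') = dot u v + dot u v'.
Proof. by rewrite /dot -big_split; apply: eq_bigr => i _; rewrite !mxE mulrDr. Qed.

Lemma dotDl {n} (u u' v : 'cV[R]_n) : dot (u + u') v = dot u v + dot u' v.
Proof. by rewrite dotC dotDr !(dotC v). Qed.

Lemma dotZr {n} a (u v : 'cV[R]_n) : dot u (a *: v) = a * dot u v.
Proof. by rewrite /dot mulr_sumr; apply: eq_bigr => i _; rewrite !mxE mulrCA. Qed.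

Lemma dotZl {n} a (u v : 'cV[R]_n) : dot (a *: u) v = a * dot u v.
Proof. by rewrite dotC dotZr dotC. Qed.

Lemma dot0l {n} (u : 'cV[R]_n) : dot 0 u = 0.
Proof. by rewrite /dot big1 // => i _; rewrite mxE mul0r. Qed.

Lemma l2norm0 {n} : l2norm (0 : 'cV[R]_n) = 0.
Proof. by rewrite /l2norm big1 ?sqrtr0 // => i _; rewrite mxE expr0n. Qed.

Lemma l2norm_eq0 {n} (u : 'cV[R]_n) : l2norm u = 0 -> u = 0.
Proof.
move=> u0; apply/matrixP => i j; rewrite ord1 mxE.
have sq0 : dot u u = 0 by rewrite -sqr_l2norm u0 expr0n.
have nn k : true -> 0 <= u k 0 * u k 0 by rewrite -expr2 sqr_ge0.
have /eqP := @psumr_eq0P _ _ _ _ nn sq0 i isT.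
by rewrite -expr2 sqrf_eq0 => /eqP.
Qed.

Lemma dot_comb {n} a b (u v : 'cV[R]_n) :
  dot (a *: u + b *: v) (a *: u + b *: v) =
  a ^+ 2 * dot u u + 2 * a * b * dot u v + b ^+ 2 * dot v v.
Proof. rewrite !dotDl !dotDr !dotZl !dotZr (dotC v u); ring. Qed.

(* Cauchy-Schwarz, from the nonnegativity of |v| u - |u| v squared. *)
Lemma cauchy_schwarz {n} (u v : 'cV[R]_n) : dot u v <= l2norm u * l2norm v.
Proof.
have [/l2norm_eq0 ->|u0] := eqVneq (l2norm u) 0.
  by rewrite dot0l mulr_ge0 ?l2norm_ge0.
have [/l2norm_eq0 ->|v0] := eqVneq (l2norm v) 0.
  by rewrite dotC dot0l mulr_ge0 ?l2norm_ge0.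
have up : 0 < l2norm u by rewrite lt_def u0 l2norm_ge0.
have vp : 0 < l2norm v by rewrite lt_def v0 l2norm_ge0.
have := dot_ge0 (l2norm v *: u + (- l2norm u) *: v).
rewrite dot_comb -!sqr_l2norm; have := mulr_gt0 up vp; nra.
Qed.

Lemma orthogonal_sum_bounds {n} (u v : 'cV[R]_n) : dot u v = 0 ->
  l2norm u <= l2norm (u + v) /\ l2norm u + l2norm v <= Num.sqrt 2 * l2norm (u + v).
Proof.
move=> uv0.
have pyth : l2norm (u + v) ^+ 2 = l2norm u ^+ 2 + l2norm v ^+ 2.
  by rewrite !sqr_l2norm dotDl !dotDr uv0 (dotC v u) uv0 addr0 add0r.
have a0 := l2norm_ge0 u; have b0 := l2norm_ge0 v; have c0 := l2norm_ge0 (u + v).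
split; first by rewrite -ler_sqr ?nnegrE // pyth lerDl sqr_ge0.
rewrite -ler_sqr ?nnegrE ?addr_ge0 ?mulr_ge0 ?sqrtr_ge0 //.
rewrite exprMn sqr_sqrtr ?ler0n // pyth -subr_ge0.
have -> : 2 * (l2norm u ^+ 2 + l2norm v ^+ 2) - (l2norm u + l2norm v) ^+ 2
          = (l2norm u - l2norm v) ^+ 2 by ring.
exact: sqr_ge0.
Qed.

End Euclid.

Section Blocks.
Variables (R : rcfType) (N B : nat) (blk : 'I_N -> 'I_B) (w : 'I_B -> R).
Implicit Types (x y z : 'cV[R]_N) (S T U V : {set 'I_B}).

Local Notation restrict := (restrict blk).
Local Notation bnorm := (bnorm blk).
Local Notation womega := (womega w).

Definition supported y T := forall i, blk i \notin T -> y i 0 = 0.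

Definition wmass x V : R := \sum_(b in V) w b * bnorm x b.

Lemma womega_ge0 S : 0 <= womega S.
Proof. by apply: sumr_ge0 => b _; rewrite sqr_ge0. Qed.

Lemma womega_sub S T : S \subset T -> womega S <= womega T.
Proof.
move=> sST; rewrite /womega [X in X <= _]big_mkcond [X in _ <= X]big_mkcond.
apply: ler_sum => b _; case: ifP => [/(subsetP sST) -> //|_].
by case: ifP; rewrite ?sqr_ge0.
Qed.

Lemma womegaU S T : womega (S :|: T) <= womega S + womega T.
Proof.
rewrite /womega [X in X <= _]big_mkcond [X in _ <= X + _]big_mkcond.
rewrite [X in _ <= _ + X]big_mkcond -big_split /=.
apply: ler_sum => b _; rewrite in_setU.
by case: (b \in S); case: (b \in T); rewrite /= ?addr0 ?add0r ?lerDl ?sqr_ge0.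
Qed.

Lemma wnorm0_supported y T : supported y T -> wnorm0 blk w y <= womega T.
Proof.
move=> sy; apply: womega_sub; apply/subsetP => b.
rewrite inE => /existsP [i /andP [/eqP <- nz]].
by apply/negPn/negP => /sy yi0; rewrite yi0 eqxx in nz.
Qed.

Lemma supported_restrict T x : supported (restrict T x) T.
Proof. by move=> i /negbTE Ti; rewrite mxE Ti. Qed.

Lemma supported_comb a b y z S T : supported y S -> supported z T ->
  supported (a *: y + b *: z) (S :|: T).
Proof.
move=> sy sz i; rewrite in_setU negb_or => /andP [iS iT].
by rewrite !mxE sy // sz // !mulr0 addr0.
Qed.

Lemma dot_disjoint y z S T : supported y S -> supported z T ->
  [disjoint S & T] -> dot y z = 0.
Proof.
move=> sy sz dST; rewrite /dot big1 // => i _.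
have [iS|iS] := boolP (blk i \in S); last by rewrite sy ?mul0r.
by rewrite sz ?mulr0 // (disjointFr dST iS).
Qed.

Lemma bnorm_ge0 x b : 0 <= bnorm x b.
Proof. exact: sqrtr_ge0. Qed.

Lemma bnorm_restrict T x b :
  bnorm (restrict T x) b = if b \in T then bnorm x b else 0.
Proof.
rewrite /Defs.bnorm; under eq_bigr => i /eqP bi do rewrite mxE bi.
by case: ifP => // _; rewrite big1 ?sqrtr0 // => i _; rewrite expr0n.
Qed.

Lemma sqr_l2norm_restrict T x :
  l2norm (restrict T x) ^+ 2 = \sum_(b in T) bnorm x b ^+ 2.
Proof.
rewrite sqr_l2norm /dot (partition_big blk predT) //= [RHS]big_mkcond /=.
apply: eq_bigr => b _; rewrite sqr_sqrtr; last by apply: sumr_ge0 => i _; rewrite sqr_ge0.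
case: ifP => bT; last by rewrite big1 // => i /eqP bi; rewrite mxE bi bT mul0r.
by apply: eq_bigr => i /eqP bi; rewrite mxE bi bT expr2.
Qed.

Lemma wnorm22_restrict S x :
  wnorm22 blk w (restrict S x) = l2norm (restrict S x).
Proof.
rewrite -[RHS]ger0_norm ?l2norm_ge0 // -sqrtr_sqr sqr_l2norm_restrict.
rewrite /wnorm22 [in RHS]big_mkcond /=; congr Num.sqrt; apply: eq_bigr => b _.
by rewrite bnorm_restrict expr0 mul1r; case: ifP => // _; rewrite expr0n.
Qed.

Lemma wnorm21_restrict T x : wnorm21 blk w (restrict T x) = wmass x T.
Proof.
rewrite /wnorm21 /wmass [RHS]big_mkcond /=; apply: eq_bigr => b _.
by rewrite bnorm_restrict; case: ifP => // _; rewrite mulr0.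
Qed.

Lemma wmass_ge0 x V : (forall b, 0 <= w b) -> 0 <= wmass x V.
Proof. by move=> w0; apply: sumr_ge0 => b _; rewrite mulr_ge0 ?bnorm_ge0. Qed.

Lemma wmass_split x T U : T \subset U -> wmass x U = wmass x T + wmass x (U :\: T).
Proof.
move=> sTU; rewrite /wmass [LHS]big_mkcond [X in X + _]big_mkcond.
rewrite [X in _ + X]big_mkcond -big_split /=; apply: eq_bigr => b _.
rewrite in_setD; have [bT|bT] := boolP (b \in T); last by rewrite add0r.
by rewrite (subsetP sTU _ bT) addr0.
Qed.

Lemma restrict_split T U x : T \subset U ->
  restrict U x = restrict T x + restrict (U :\: T) x.
Proof.
move=> sTU; apply/matrixP => i j; rewrite ord1 !mxE in_setD.
have [iT|iT] := boolP (blk i \in T); last by rewrite add0r.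
by rewrite (subsetP sTU _ iT) addr0.
Qed.

Lemma restrictT x : restrict setT x = x.
Proof. by apply/matrixP => i j; rewrite ord1 !mxE in_setT. Qed.

Lemma restrict0 x : restrict set0 x = 0.
Proof. by apply/matrixP => i j; rewrite !mxE in_set0. Qed.

End Blocks.
Arguments supported_restrict {R N B} blk T x.

Section CrossTerm.
Variables (R : rcfType) (m N B : nat) (A : 'M[R]_(m, N)) (blk : 'I_N -> 'I_B)
  (w : 'I_B -> R) (t delta : R).
Hypothesis rip : forall x : 'cV[R]_N, wnorm0 blk w x <= t ->
  (1 - delta) * l2norm x ^+ 2 <= l2norm (A *m x) ^+ 2
  /\ l2norm (A *m x) ^+ 2 <= (1 + delta) * l2norm x ^+ 2.

(* Apply the RIP to
   |z| y + |y| z and |z| y - |y| z, which have equal norms. *)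
Lemma rip_cross_term (y z : 'cV[R]_N) (S T : {set 'I_B}) :
  supported blk y S -> supported blk z T -> [disjoint S & T] ->
  womega w S + womega w T <= t ->
  `|dot (A *m y) (A *m z)| <= delta * (l2norm y * l2norm z).
Proof.
move=> sy sz dST wST.
have [/l2norm_eq0 ->|y0] := eqVneq (l2norm y) 0.
  by rewrite mulmx0 dot0l normr0 l2norm0 mul0r mulr0.
have [/l2norm_eq0 ->|z0] := eqVneq (l2norm z) 0.
  by rewrite mulmx0 dotC dot0l normr0 l2norm0 !mulr0.
have yz_pos : 0 < l2norm y * l2norm z.
  by rewrite mulr_gt0 // lt_def ?y0 ?z0 l2norm_ge0.
have rip_comb c : wnorm0 blk w (l2norm z *: y + c *: z) <= t.
  apply: le_trans (wnorm0_supported w (supported_comb (l2norm z) c sy sz)) _.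
  exact: le_trans (womegaU w S T) wST.
have [lo_plus up_plus] := rip (rip_comb (l2norm y)).
have [lo_minus up_minus] := rip (rip_comb (- l2norm y)).
rewrite -(ler_pM2l yz_pos) -{1}(gtr0_norm yz_pos) -normrM ler_norml.
move: lo_plus up_plus lo_minus up_minus.
rewrite !sqr_l2norm !mulmxDr -!scalemxAr !dot_comb (dot_disjoint sy sz dST).
rewrite sqrrN -!sqr_l2norm; set a := l2norm y; set b := l2norm z; set D := dot _ _.
move=> lo_plus up_plus lo_minus up_minus; apply/andP; split; lra.
Qed.

End CrossTerm.

Section Shelling.
Variables (R : rcfType) (N B : nat) (blk : 'I_N -> 'I_B) (w : 'I_B -> R)
  (s : R) (x : 'cV[R]_N).
Hypothesis w_pos : forall b, 0 < w b.
Hypothesis s_pos : 0 < s.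
Hypothesis w_small : forall b, w b ^+ 2 <= s / 2.

Local Notation restrict := (restrict blk).
Local Notation bnorm := (bnorm blk).
Local Notation womega := (womega w).
Local Notation wmass := (wmass blk w).
Implicit Types (T U V P : {set 'I_B}).

Definition ratio (b : 'I_B) : R := bnorm x b / w b.

Definition dominates P U := forall b c, b \in P -> c \in U -> ratio c <= ratio b.

Definition greedy_prefix U T :=
  [/\ T \subset U, womega T <= s & dominates T (U :\: T)].

Lemma greedy_extend U T c : greedy_prefix U T -> c \in U :\: T ->
  (forall d, d \in U :\: T -> ratio d <= ratio c) ->
  womega T + w c ^+ 2 <= s -> greedy_prefix U (c |: T).
Proof.
move=> [sTU wT domT] cUT cmax wTc; rewrite !inE in cUT; case/andP: cUT => cT cU.
split.
- by rewrite subUset sub1set cU sTU.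
- by rewrite /Defs.womega big_setU1 //= addrC.
- move=> b d; rewrite !inE negb_or => /orP [/eqP -> | bT] /andP [/andP [_ dT] dU].
    by apply: cmax; rewrite !inE dT dU.
  by apply: domT; rewrite // !inE dT dU.
Qed.

Lemma top_group U : exists T,
  [/\ greedy_prefix U T & (T != U -> s / 2 <= womega T)].
Proof.
suff grow : forall n T, #|U :\: T| = n -> greedy_prefix U T -> exists T,
    [/\ greedy_prefix U T & (T != U -> s / 2 <= womega T)].
  apply: (grow _ set0 erefl); split; rewrite ?sub0set //.
    by rewrite /Defs.womega big_set0 ltW.
  by move=> b c; rewrite in_set0.
elim=> [|n IH] T cardUT preT.
  exists T; split => // TU; move/eqP: cardUT; rewrite cards_eq0 setD_eq0 => sUT.
  by case: preT => sTU _ _; rewrite eqEsubset sTU sUT in TU.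
have [c0 c0UT] : exists c0, c0 \in U :\: T.
  by apply/set0Pn; rewrite -cards_eq0 cardUT.
case: (@arg_maxP _ _ _ c0 (mem (U :\: T)) ratio c0UT) => c cUT' cmax.
have cUT : c \in U :\: T := cUT'.
have [wTc|wTc] := lerP (womega T + w c ^+ 2) s.
  apply: (IH (c |: T)); last exact: greedy_extend.
  have -> : U :\: (c |: T) = (U :\: T) :\ c.
    by apply/setP => d; rewrite !inE; case: (d == c).
  by move: (cardsD1 c (U :\: T)); rewrite cardUT cUT add1n => -[].
by exists T; split => // _; have := w_small c; lra.
Qed.

Lemma group_bound T P : womega T <= s -> dominates P T -> s / 2 <= womega P ->
  l2norm (restrict T x) <= 2 / Num.sqrt s * wmass x P.
Proof.
move=> wT domPT wP.
have blockwise c : c \in T -> bnorm x c * womega P <= w c * wmass x P.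
  move=> cT; rewrite /Defs.womega /wmass !mulr_sumr; apply: ler_sum => b bP.
  have := domPT b c bP cT; rewrite /ratio.
  rewrite ler_pdivrMr // mulrAC ler_pdivlMr //.
  have := w_pos b; have := bnorm_ge0 blk x b; nra.
have M0 : 0 <= wmass x P by apply: wmass_ge0 => b; exact: ltW.
have squared : l2norm (restrict T x) ^+ 2 * womega P ^+ 2 <= s * wmass x P ^+ 2.
  apply: le_trans (ler_wpM2r (sqr_ge0 _) wT); rewrite /(womega T).
  rewrite sqr_l2norm_restrict !mulr_suml; apply: ler_sum => c cT.
  rewrite -!exprMn ler_sqr ?nnegrE ?mulr_ge0 ?bnorm_ge0 ?womega_ge0 //.
    exact: blockwise.
  exact: ltW.
have heavy : (s / 2) ^+ 2 <= womega P ^+ 2.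
  by rewrite ler_sqr ?nnegrE ?womega_ge0 ?divr_ge0 ?ler0n // ltW.
have cleared : l2norm (restrict T x) ^+ 2 * s <= 4 * wmass x P ^+ 2.
  have := le_trans (ler_wpM2l (sqr_ge0 _) heavy) squared.
  by move=> scaled; rewrite -(ler_pM2r s_pos); lra.
have bound_ge0 : 0 <= 2 / Num.sqrt s * wmass x P by rewrite mulr_ge0 // divr_ge0 ?sqrtr_ge0.
have sqrt_s : Num.sqrt s ^+ 2 = s by rewrite sqr_sqrtr // ltW.
rewrite -ler_sqr ?nnegrE ?l2norm_ge0 // !exprMn exprVn sqrt_s.
by rewrite mulrAC ler_pdivlMr //; lra.
Qed.

(* Cutting [U] into successive top groups, each controlled by
   the mass of the previous one (lemma [group_bound]), gives
   F U <= c * 2/sqrt s * (wmass P + wmass U) for any heavy group P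
   dominating [U]. *)
Lemma shelling_bound (c : R) (F : {set 'I_B} -> R) :
  0 <= c -> (forall T V, T \subset V -> F V = F T + F (V :\: T)) ->
  forall U P, (forall T, T \subset U -> womega T <= s ->
                F T <= c * l2norm (restrict T x)) ->
  dominates P U -> (U != set0 -> s / 2 <= womega P) ->
  F U <= c * (2 / Num.sqrt s * (wmass x P + wmass x U)).
Proof.
move=> c0 F_split U; have [n] := ubnP #|U|; elim: n U => // n IH U.
rewrite ltnS => cardU P F_le domPU heavyP.
have mass0 V : 0 <= wmass x V by apply: wmass_ge0 => b; exact: ltW.
have coef0 : 0 <= 2 / Num.sqrt s by rewrite divr_ge0 ?sqrtr_ge0.
have [U0|U_nz] := eqVneq U set0.
  have wU : womega U <= s by rewrite U0 /Defs.womega big_set0 ltW.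
  apply: le_trans (F_le U (subxx U) wU) _.
  by rewrite U0 restrict0 l2norm0 mulr0 mulr_ge0 // mulr_ge0 // addr_ge0.
have [T [[sTU wT domT] TU]] := top_group U.
have T_nz : T != set0.
  apply/eqP => T0; have : s / 2 <= womega T by apply: TU; rewrite T0 eq_sym.
  by rewrite T0 /Defs.womega big_set0 leNgt divr_gt0.
have headT : F T <= c * (2 / Num.sqrt s * wmass x P).
  apply: le_trans (F_le T sTU wT) (ler_wpM2l c0 (group_bound wT _ (heavyP U_nz))).
  by move=> b d bP dT; apply: domPU => //; exact: (subsetP sTU).
have tail : F (U :\: T) <= c * (2 / Num.sqrt s * (wmass x T + wmass x (U :\: T))).
  apply: IH => //.
  - rewrite cardsDS //; have := subset_leq_card sTU; rewrite -card_gt0 in T_nz.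
    by move: cardU T_nz; lia.
  - by move=> T' sT'; apply: F_le; exact: subset_trans sT' (subsetDl U T).
  - move=> UT_nz; apply: TU; apply: contra_neq UT_nz => ->; exact: setDv.
rewrite (F_split T U sTU) (wmass_split blk w x sTU).
move: headT tail; set k := 2 / Num.sqrt s; rewrite !mulrDr; lra.
Qed.

End Shelling.

Lemma cancel_square (R : realFieldType) (d c K : R) : d < 1 -> 0 <= c -> 0 <= K ->
  (1 - d) * c ^+ 2 <= c * K -> (1 - d) * c <= K.
Proof.
move=> d1 c0 K0; have [->|c_nz] := eqVneq c 0; first by rewrite mulr0.
have c_pos : 0 < c by rewrite lt_def c_nz.
by rewrite expr2 => sq_le; rewrite -(ler_pM2r c_pos); lra.
Qed.

Section NullSpaceProperty.
Variables (R : rcfType) (m N B : nat) (A : 'M[R]_(m, N)) (blk : 'I_N -> 'I_B)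
  (w : 'I_B -> R) (s delta : R).
Hypothesis w_pos : forall b, 0 < w b.
Hypothesis s_pos : 0 < s.
Hypothesis w_small : forall b, w b ^+ 2 <= s / 2.
Hypothesis delta_ge0 : 0 <= delta.
Hypothesis delta_lt1 : delta < 1.
Hypothesis rip : forall x : 'cV[R]_N, wnorm0 blk w x <= 2 * s ->
  (1 - delta) * l2norm x ^+ 2 <= l2norm (A *m x) ^+ 2
  /\ l2norm (A *m x) ^+ 2 <= (1 + delta) * l2norm x ^+ 2.

Local Notation restrict := (restrict blk).
Local Notation womega := (womega w).
Local Notation wmass := (wmass blk w).

Lemma rip_supported (z : 'cV[R]_N) (T : {set 'I_B}) :
  supported blk z T -> womega T <= 2 * s ->
  (1 - delta) * l2norm z ^+ 2 <= l2norm (A *m z) ^+ 2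
  /\ l2norm (A *m z) <= Num.sqrt (1 + delta) * l2norm z.
Proof.
move=> sz wT; have [lower upper] := rip (le_trans (wnorm0_supported w sz) wT).
have sqrt_sq : Num.sqrt (1 + delta) ^+ 2 = 1 + delta.
  by rewrite sqr_sqrtr // addr_ge0 ?ler01.
split => //; rewrite -ler_sqr ?nnegrE ?mulr_ge0 ?l2norm_ge0 ?sqrtr_ge0 //.
by rewrite exprMn sqrt_sq.
Qed.

(* The tail of [x] outside S and the top group T1 of its complement
   interacts only weakly with the head z = x[S] + x[T1]: shelling the tail into
   groups of weight <= s and applying [rip_cross_term] to each group against
   x[S] and x[T1] separately (each pair has weight <= 2s). *)
Lemma tail_interaction (x : 'cV[R]_N) (S T1 : {set 'I_B}) :
  womega S <= s -> T1 \subset ~: S -> womega T1 <= s ->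
  dominates blk w x T1 (~: S :\: T1) -> (T1 != ~: S -> s / 2 <= womega T1) ->
  - dot (A *m (restrict S x + restrict T1 x)) (A *m restrict (~: S :\: T1) x)
    <= delta * (l2norm (restrict S x) + l2norm (restrict T1 x))
       * (2 / Num.sqrt s * wmass x (~: S)).
Proof.
move=> wS sT1 wT1 domT1 heavyT1.
have c0 : 0 <= delta * (l2norm (restrict S x) + l2norm (restrict T1 x)).
  by rewrite mulr_ge0 // addr_ge0 ?l2norm_ge0.
rewrite (wmass_split blk w x sT1); set z := restrict S x + restrict T1 x.
apply: (shelling_bound w_pos s_pos w_small (F := fun V => - dot (A *m z) (A *m restrict V x)))
  => // [T V sTV | T sTU wT | UT_nz].
- by rewrite (restrict_split blk x sTV) [X in dot _ X]mulmxDr dotDr opprD.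
- have disj (V : {set 'I_B}) : T \subset ~: V -> [disjoint V & T].
    by rewrite subsets_disjoint setCK disjoint_sym.
  have sT : T \subset ~: S :&: ~: T1 by rewrite -setDE.
  have dST : [disjoint S & T] by apply: disj; exact: subset_trans sT (subsetIl _ _).
  have dT1T : [disjoint T1 & T] by apply: disj; exact: subset_trans sT (subsetIr _ _).
  have cross (V : {set 'I_B}) : [disjoint V & T] -> womega V <= s ->
      - dot (A *m restrict V x) (A *m restrict T x)
      <= delta * (l2norm (restrict V x) * l2norm (restrict T x)).
    move=> dVT wV; have wVT : womega V + womega T <= 2 * s by lra.
    have := rip_cross_term rip (supported_restrict blk V x)
                               (supported_restrict blk T x) dVT wVT.
    by rewrite -normrN; exact: ler_normlW.
  have := cross S dST wS; have := cross T1 dT1T wT1.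
  rewrite /z mulmxDr dotDl; lra.
- by apply: heavyT1; apply: contra_neq UT_nz => ->; rewrite setDv.
Qed.

(* The robust null space estimate for a single x and S: with z the head,
   (1 - delta) ||z||^2 <= <Az, Ax> - <Az, A x[tail]>, and the two terms are
   bounded by Cauchy-Schwarz and by [tail_interaction]. *)
Lemma robust_nsp_estimate (x : 'cV[R]_N) (S : {set 'I_B}) : womega S <= s ->
  l2norm (restrict S x)
    <= 2 * Num.sqrt 2 * delta / (1 - delta) / Num.sqrt s * wmass x (~: S)
       + Num.sqrt (1 + delta) / (1 - delta) * l2norm (A *m x).
Proof.
move=> wS; have [T1 [[sT1 wT1 domT1] heavyT1]] := top_group blk x s_pos w_small (~: S).
set u := restrict S x; set v := restrict T1 x; set z := u + v.
set M := 2 / Num.sqrt s * wmass x (~: S).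
have dST1 : [disjoint S & T1] by move: sT1; rewrite subsets_disjoint setCK disjoint_sym.
have [z_lower Az_upper] : (1 - delta) * l2norm z ^+ 2 <= l2norm (A *m z) ^+ 2
    /\ l2norm (A *m z) <= Num.sqrt (1 + delta) * l2norm z.
  apply: rip_supported (le_trans (womegaU w S T1) _); last by lra.
  by have := supported_comb 1 1 (supported_restrict blk S x) (supported_restrict blk T1 x);
    rewrite !scale1r.
have x_split : x = z + restrict (~: S :\: T1) x.
  rewrite -addrA -(restrict_split blk x sT1) -setTD.
  by rewrite -(restrict_split blk x (subsetT S)) restrictT.
have [u_le uv_le] := orthogonal_sum_bounds
  (dot_disjoint (supported_restrict blk S x) (supported_restrict blk T1 x) dST1).
have tail := tail_interaction wS sT1 wT1 domT1 heavyT1.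
have cross : dot (A *m z) (A *m x) <= Num.sqrt (1 + delta) * l2norm z * l2norm (A *m x).
  exact: le_trans (cauchy_schwarz _ _) (ler_wpM2r (l2norm_ge0 _) Az_upper).
have M0 : 0 <= M.
  by rewrite mulr_ge0 ?divr_ge0 ?sqrtr_ge0 //; apply: wmass_ge0 => b; exact: ltW.
have energy : (1 - delta) * l2norm z ^+ 2
    <= l2norm z * (Num.sqrt (1 + delta) * l2norm (A *m x) + Num.sqrt 2 * delta * M).
  have Ax_split : dot (A *m z) (A *m x)
      = l2norm (A *m z) ^+ 2 + dot (A *m z) (A *m restrict (~: S :\: T1) x).
    by rewrite sqr_l2norm -dotDr -mulmxDr -x_split.
  have := ler_wpM2r (mulr_ge0 delta_ge0 M0) uv_le; move: tail; rewrite -/u -/v -/z -/M; lra.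
have K0 : 0 <= Num.sqrt (1 + delta) * l2norm (A *m x) + Num.sqrt 2 * delta * M.
  apply: addr_ge0; first exact: mulr_ge0 (sqrtr_ge0 _) (l2norm_ge0 _).
  exact: mulr_ge0 (mulr_ge0 (sqrtr_ge0 _) delta_ge0) M0.
have := cancel_square delta_lt1 (l2norm_ge0 z) K0 energy.
have sqrt_s_nz : Num.sqrt s != 0 by rewrite gt_eqF // sqrtr_gt0.
have delta_nz : 1 - delta != 0 by rewrite gt_eqF // subr_gt0.
have -> : 2 * Num.sqrt 2 * delta / (1 - delta) / Num.sqrt s * wmass x (~: S)
          + Num.sqrt (1 + delta) / (1 - delta) * l2norm (A *m x)
        = (Num.sqrt (1 + delta) * l2norm (A *m x) + Num.sqrt 2 * delta * M) / (1 - delta).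
  by rewrite /M; field; rewrite delta_nz sqrt_s_nz.
rewrite ler_pdivlMr ?subr_gt0 // => z_le; apply: le_trans z_le.
by rewrite mulrC ler_wpM2l // subr_ge0 ltW.
Qed.

End NullSpaceProperty.

Lemma rho_lt1 (R : rcfType) (delta : R) : 0 <= delta ->
  delta < 1 / (2 * Num.sqrt 2 + 1) -> 2 * Num.sqrt 2 * delta / (1 - delta) < 1.
Proof.
move=> d0; have q0 : 0 <= Num.sqrt (2 : R) := sqrtr_ge0 _.
have pos : 0 < 2 * Num.sqrt (2 : R) + 1 by rewrite ltr_wpDl ?mulr_ge0.
rewrite ltr_pdivlMr // => d_small.
have d1 : 0 < 1 - delta by nra.
by rewrite ltr_pdivrMr // mul1r; nra.
Qed.

Lemma sparsity_level (R : rcfType) (B : nat) (w : 'I_B -> R) (s : R) (b0 : 'I_B) :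
  (forall b, 1 <= w b) -> 2 * winf w ^+ 2 <= s ->
  0 < s /\ forall b, w b ^+ 2 <= s / 2.
Proof.
move=> w1 hs; have w_le_inf b : w b <= winf w := le_bigmax _ _ b.
have inf1 : 1 <= winf w := le_trans (w1 b0) (w_le_inf b0).
split; first by apply: lt_le_trans hs; rewrite mulr_gt0 // exprn_gt0 // (lt_le_trans ltr01).
move=> b; rewrite ler_pdivlMr // mulrC; apply: le_trans hs.
rewrite ler_wpM2l // ler_sqr ?nnegrE ?(le_trans ler01) //.
Qed.

Theorem mainTheorem6 (R : rcfType) (m N B : nat) (A : 'M[R]_(m, N))
  (blk : 'I_N -> 'I_B) (w : 'I_B -> R) (s delta : R) :
  (forall b : 'I_B, exists i : 'I_N, blk i = b) ->
  (forall b : 'I_B, 1 <= w b) ->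
  2 * winf w ^+ 2 <= s ->
  WBRIP blk w A (2 * s) delta ->
  delta < 1 / (2 * Num.sqrt 2 + 1) ->
  BRNSP2 blk w A s (2 * Num.sqrt 2 * delta / (1 - delta))
                   (Num.sqrt (1 + delta) / (1 - delta)).
Proof.
move=> _ w1 hs [/andP [d0 d1] _ rip] d_small.
have rho_pos : 0 < 2 * Num.sqrt 2 * delta / (1 - delta).
  by rewrite divr_gt0 ?mulr_gt0 ?sqrtr_gt0 ?subr_gt0 ?ltr0n.
have tau_pos : 0 < Num.sqrt (1 + delta) / (1 - delta).
  by rewrite divr_gt0 ?subr_gt0 // sqrtr_gt0 addr_gt0.
split => //; first by rewrite rho_pos rho_lt1 ?ltW.
move=> x S wS; rewrite wnorm22_restrict wnorm21_restrict.
have [b0 _|no_block] := pickP (@predT 'I_B).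
  have [s_pos w_small] := sparsity_level b0 w1 hs.
  have w_pos b : 0 < w b := lt_le_trans ltr01 (w1 b).
  exact (robust_nsp_estimate w_pos s_pos w_small (ltW d0) d1 rip x wS).
have -> : S = set0 by apply/setP => b; have := no_block b.
rewrite restrict0 l2norm0; apply: addr_ge0.
  apply: mulr_ge0; first exact: divr_ge0 (ltW rho_pos) (sqrtr_ge0 _).
  by apply: wmass_ge0 => b; exact: le_trans ler01 (w1 b).
exact: mulr_ge0 (ltW tau_pos) (l2norm_ge0 _).
Qed.
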